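(* Let $\mathcal{P}$ be the regular octahedron, centered at the origin and scaled so that its midsphere (the sphere touching the midpoint of every edge) is the unit sphere $\mathbb{S}^2\subset\mathbb{R}^3$. For $\delta\in[0,\pi/2]$ let $L(\delta)$ be the configuration of the twelve lines obtained from the lines containing the twelve edges of $\mathcal{P}$ by rotating each line, inside the plane tangent to $\mathbb{S}^2$ at the midpoint $m$ of that edge, about the axis through the origin and $m$ by the angle $\delta$, all lines being rotated in the same sense (counterclockwise as viewed from the tip of the axis, i.e. from outside the sphere). Let $d(\delta)$ denote the minimal distance between two distinct lines of $L(\delta)$. Then the maximum of $d(\delta)$ over $\delta\in[0,\pi/2]$ is attained at the angle $\delta_{\mathcal{O}}$ with $$\tan(\delta_{\mathcal{O}})=\frac{3^{1/4}}{\sqrt{2}}$$ (approximately $\delta_{\mathcal{O}}\simeq 0.74946$), and the square of this maximal distance is the value at $\delta=\delta_{\mathcal{O}}$ of the function $$-\,\frac{4\sin^2(2\delta)}{\bigl(\cos(2\delta)-3\bigr)\bigl(\cos(2\delta)+5\bigr)},$$ namely $$d(\delta_{\mathcal{O}})^2=2-\sqrt{3}=\frac{(\sqrt{3}-1)^2}{2}\simeq 0.26795 .$$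
   Context: Each line of $L(\delta)$ is tangent to the unit sphere (at the corresponding edge midpoint). At $\delta=0$ the lines contain the edges of the octahedron; at $\delta=\pi/2$ they contain the edges of the dual cube (with the same midsphere). The rotation is carried out so that the configuration $L(\delta)$ is invariant under the group of proper (orientation-preserving) symmetries of the octahedron. *)

From HB Require Import structures.
From mathcomp Require Import all_boot all_order all_algebra.
From mathcomp Require Import all_classical all_reals all_analysis.
Set Implicit Arguments. Unset Strict Implicit. Unset Printing Implicit Defensive.
Import Order.TTheory GRing.Theory Num.Theory.
Local Open Scope ring_scope.
Local Open Scope classical_set_scope.

Section Octa.
Variable R : realType.

Definition vec := 'rV[R]_3.
Definition enorm (x : vec) : R := Num.sqrt (\sum_(i < 3) x ord0 i ^+ 2).
Definition cross (u v : vec) : vec :=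
  \row_(k < 3) (u ord0 (k + 1) * v ord0 (k + 2) - u ord0 (k + 2) * v ord0 (k + 1)).

Definition line_dist (p u q v : vec) : R :=
  inf [set r | exists s t : R, r = enorm ((p + s *: u) - (q + t *: v))].

(* vertices of the octahedron with unit midsphere: sign * sqrt 2 * e_k *)
Definition vert := ('I_3 * bool)%type.
Definition vtx (a : vert) : vec :=
  \row_(k < 3) (if k == a.1 then (if a.2 then Num.sqrt 2 else - Num.sqrt 2) else 0).

(* an edge = pair of vertices on different axes, listed with smaller axis first;
   there are exactly 12 of them *)
Definition is_edge (e : vert * vert) : Prop := (e.1.1 < e.2.1)%N.

Definition edge_mid (e : vert * vert) : vec := (2%:R)^-1 *: (vtx e.1 + vtx e.2).
Definition edge_dir (e : vert * vert) : vec := vtx e.2 - vtx e.1.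

(* line of L(delta) for edge e: through the midpoint m, direction rotated by
   delta about the axis O m (counterclockwise seen from outside) *)
Definition Ldir (delta : R) (e : vert * vert) : vec :=
  cos delta *: edge_dir e + sin delta *: cross (edge_mid e) (edge_dir e).

Definition dmin (delta : R) : R :=
  inf [set r | exists e1 e2, [/\ is_edge e1, is_edge e2, e1 <> e2 &
         r = line_dist (edge_mid e1) (Ldir delta e1) (edge_mid e2) (Ldir delta e2)]].

Definition fO (delta : R) : R :=
  - (4 * sin (2 * delta) ^+ 2) / ((cos (2 * delta) - 3) * (cos (2 * delta) + 5)).

End Octa.

From HB Require Import structures.
From mathcomp Require Import all_boot all_order all_algebra.
From mathcomp Require Import all_classical all_reals all_analysis.
From mathcomp Require Import ring lra.
Import Order.TTheory GRing.Theory Num.Theory.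
Local Open Scope ring_scope.

Set Implicit Arguments.
Unset Strict Implicit.

(* The line of L(delta) for the edge e is m_e + R u_e, where, in integer
   coordinates, m_e = (sqrt 2 / 2) M_e and u_e = sqrt 2 cos delta D_e +
   sin delta (M_e x D_e) with M_e, D_e in Z^3, so that |u_e| = 2.  Two skew
   lines are at distance |(m_1 - m_2) . (u_1 x u_2)| / |u_1 x u_2|, and
   |u_1 x u_2|^2 = 16 - (u_1 . u_2)^2; both the triple product and u_1 . u_2
   are quadratic forms in (sqrt 2 cos delta, sin delta) whose integer
   coefficients depend only on the pair of edges.  A finite computation shows
   that only eight coefficient patterns occur.  For two edges of a common face
   the squared distance is fO delta = 4 c^2 (1 - c^2) / (4 - c^4), c = cos delta,
   which is at most 2 - sqrt 3, with equality when c^2 = 4 - 2 sqrt 3, i.e.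
   when tan delta = 3^(1/4) / sqrt 2; at that angle the seven other patterns
   give squared distances at least 2 - sqrt 3. *)

Section Vectors.
Variable R : realType.
Implicit Types (a b c d e f k l : R) (p q u v w : vec R).

Definition mk3 a b c : vec R := \row_(i < 3) [:: a; b; c]`_i.
Definition dot u v : R := \sum_(i < 3) u ord0 i * v ord0 i.

Lemma vec_mk3 v : v = mk3 (v ord0 0) (v ord0 1) (v ord0 2).
Proof.
by apply/rowP => -[[|[|[|i]]] hi]; rewrite !mxE //=; congr (v _ _); exact/val_inj.
Qed.

Lemma mk3D a b c d e f : mk3 a b c + mk3 d e f = mk3 (a + d) (b + e) (c + f).
Proof. by apply/rowP => -[[|[|[|i]]] hi]; rewrite !mxE. Qed.

Lemma mk3N a b c : - mk3 a b c = mk3 (- a) (- b) (- c).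
Proof. by apply/rowP => -[[|[|[|i]]] hi]; rewrite !mxE //= oppr0. Qed.

Lemma mk3Z k a b c : k *: mk3 a b c = mk3 (k * a) (k * b) (k * c).
Proof. by apply/rowP => -[[|[|[|i]]] hi]; rewrite !mxE //= mulr0. Qed.

Lemma cross_mk3 a b c d e f :
  cross (mk3 a b c) (mk3 d e f) = mk3 (b * f - c * e) (c * d - a * f) (a * e - b * d).
Proof. by apply/rowP => -[[|[|[|i]]] hi]; rewrite !mxE. Qed.

Lemma dot_mk3 a b c d e f : dot (mk3 a b c) (mk3 d e f) = a * d + b * e + c * f.
Proof. by rewrite /dot !big_ord_recr big_ord0 /= !mxE /= add0r. Qed.

Lemma enorm_dot u : enorm u = Num.sqrt (dot u u).
Proof. by congr Num.sqrt; apply: eq_bigr => i _; rewrite expr2. Qed.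

Lemma dot_ge0 u : 0 <= dot u u.
Proof. by rewrite (vec_mk3 u) dot_mk3 -!expr2 !addr_ge0 ?sqr_ge0. Qed.

Lemma dotC u v : dot u v = dot v u.
Proof. by rewrite (vec_mk3 u) (vec_mk3 v) !dot_mk3; ring. Qed.

Lemma dotDl u v w : dot (u + v) w = dot u w + dot v w.
Proof. by rewrite (vec_mk3 u) (vec_mk3 v) (vec_mk3 w) mk3D !dot_mk3; ring. Qed.

Lemma dotBl u v w : dot (u - v) w = dot u w - dot v w.
Proof. by rewrite (vec_mk3 u) (vec_mk3 v) (vec_mk3 w) mk3N mk3D !dot_mk3; ring. Qed.

Lemma dotZl k u v : dot (k *: u) v = k * dot u v.
Proof. by rewrite (vec_mk3 u) (vec_mk3 v) mk3Z !dot_mk3; ring. Qed.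

Lemma crossZ k l u v : cross (k *: u) (l *: v) = (k * l) *: cross u v.
Proof. by rewrite (vec_mk3 u) (vec_mk3 v) !mk3Z !cross_mk3 mk3Z; congr mk3; ring. Qed.

Lemma dot_cross_l u v : dot u (cross u v) = 0.
Proof. by rewrite (vec_mk3 u) (vec_mk3 v) cross_mk3 dot_mk3; ring. Qed.

Lemma dot_cross_r u v : dot v (cross u v) = 0.
Proof. by rewrite (vec_mk3 u) (vec_mk3 v) cross_mk3 dot_mk3; ring. Qed.

Lemma dot_comb a b (x1 y1 x2 y2 : vec R) :
  dot (a *: x1 + b *: y1) (a *: x2 + b *: y2) =
  dot x1 x2 * a ^+ 2 + (dot x1 y2 + dot y1 x2) * (a * b) + dot y1 y2 * b ^+ 2.
Proof.
rewrite (vec_mk3 x1) (vec_mk3 y1) (vec_mk3 x2) (vec_mk3 y2).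
by rewrite !mk3Z !mk3D !dot_mk3; ring.
Qed.

Lemma dot_cross_comb a b w (x1 y1 x2 y2 : vec R) :
  dot w (cross (a *: x1 + b *: y1) (a *: x2 + b *: y2)) =
  dot w (cross x1 x2) * a ^+ 2 + (dot w (cross x1 y2) + dot w (cross y1 x2)) * (a * b)
  + dot w (cross y1 y2) * b ^+ 2.
Proof.
rewrite (vec_mk3 w) (vec_mk3 x1) (vec_mk3 y1) (vec_mk3 x2) (vec_mk3 y2).
by rewrite !mk3Z !mk3D !cross_mk3 !dot_mk3; ring.
Qed.

Lemma dot_cross_cross u v :
  dot (cross u v) (cross u v) = dot u u * dot v v - dot u v ^+ 2.
Proof. by rewrite (vec_mk3 u) (vec_mk3 v) !cross_mk3 !dot_mk3; ring. Qed.

Lemma dot_sqr_le u v : dot u v ^+ 2 <= dot u u * dot v v.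
Proof. by rewrite -subr_ge0 -dot_cross_cross dot_ge0. Qed.

(* Cramer's rule in the basis u, v, u x v. *)
Lemma cross_basis u v w (n := cross u v) :
  dot n n *: w = dot w n *: n + dot (cross w v) n *: u - dot (cross w u) n *: v.
Proof.
rewrite /n (vec_mk3 u) (vec_mk3 v) (vec_mk3 w) !cross_mk3 !dot_mk3 !mk3Z mk3N !mk3D.
by congr mk3; ring.
Qed.

Lemma inf_attained (E : set R) m : E m -> (forall r, E r -> m <= r) -> inf E = m.
Proof.
move=> Em lbm; apply/le_anti/andP; split.
  by apply: ge_inf Em; exists m.
by apply: lb_le_inf => //; exists m.
Qed.

Lemma line_dist_skew p u q v (n := cross u v) : 0 < dot n n ->
  line_dist p u q v = Num.sqrt (dot (p - q) n ^+ 2 / dot n n).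
Proof.
move=> n_gt0; have n_neq0 := lt0r_neq0 n_gt0; set w := p - q.
have offset s t : p + s *: u - (q + t *: v) = w + s *: u - t *: v.
  by rewrite /w opprD !addrA [p + _ - q]addrAC.
clearbody w.
rewrite /line_dist; apply: inf_attained.
  exists (- (dot (cross w v) n / dot n n)), (- (dot (cross w u) n / dot n n)).
  rewrite offset.
  have -> : w + - (dot (cross w v) n / dot n n) *: u - - (dot (cross w u) n / dot n n) *: v
          = (dot w n / dot n n) *: n.
    apply: (scalerI n_neq0); rewrite scalerBr scalerDr !scalerA !mulrN.
    rewrite !(mulrCA (dot n n)) !divff // !mulr1 cross_basis !scaleNr opprK -/n.
    by rewrite addrAC subrK addrK.
  rewrite enorm_dot dotZl (dotC n (_ *: _)) dotZl; congr Num.sqrt; field.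
  by rewrite n_neq0.
move=> _ [s [t ->]]; rewrite enorm_dot offset ler_sqrt ?dot_ge0 // ler_pdivrMr //.
suff -> : dot w n = dot (w + s *: u - t *: v) n by exact: dot_sqr_le.
by rewrite dotBl dotDl !dotZl /n dot_cross_l dot_cross_r !mulr0 addr0 subr0.
Qed.

Lemma line_dist_ge0 p u q v : 0 <= line_dist p u q v.
Proof.
apply: lb_le_inf; first by exists (enorm (p + 0 *: u - (q + 0 *: v))), 0, 0.
by move=> _ [s [t ->]]; exact: sqrtr_ge0.
Qed.

End Vectors.

Definition ivec := (int * int * int)%type.

Definition icross (u v : ivec) : ivec :=
  let: (a, b, c) := u in let: (d, e, f) := v in
  (b * f - c * e, c * d - a * f, a * e - b * d).

Definition idot (u v : ivec) : int :=
  let: (a, b, c) := u in let: (d, e, f) := v in a * d + b * e + c * f.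

Section IntegerVectors.
Variable R : realType.

Definition ivecR (v : ivec) : vec R :=
  let: (a, b, c) := v in mk3 a%:~R b%:~R c%:~R.

Definition qform (v : ivec) (a b : R) : R :=
  let: (x, y, z) := v in x%:~R * a ^+ 2 + y%:~R * (a * b) + z%:~R * b ^+ 2.

Lemma ivecRD u v : ivecR (u + v) = ivecR u + ivecR v.
Proof. by case: u v => [[a b] c] [[d e] f]; rewrite /= mk3D !intrD. Qed.

Lemma ivecRB u v : ivecR (u - v) = ivecR u - ivecR v.
Proof. by case: u v => [[a b] c] [[d e] f]; rewrite /= mk3N mk3D !intrB. Qed.

Lemma cross_ivecR u v : cross (ivecR u) (ivecR v) = ivecR (icross u v).
Proof. by case: u v => [[a b] c] [[d e] f]; rewrite /= cross_mk3 !intrB !intrM. Qed.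

Lemma dot_ivecR u v : dot (ivecR u) (ivecR v) = (idot u v)%:~R.
Proof. by case: u v => [[a b] c] [[d e] f]; rewrite /= dot_mk3 !intrD !intrM. Qed.

End IntegerVectors.

Definition ivtx (a : vert) : ivec :=
  let s := if a.2 then 1 else -1 in
  match val a.1 with 0 => (s, 0, 0) | 1 => (0, s, 0) | _ => (0, 0, s) end.

Definition imid (e : vert * vert) : ivec := ivtx e.1 + ivtx e.2.
Definition idir (e : vert * vert) : ivec := ivtx e.2 - ivtx e.1.
Definition inormal (e : vert * vert) : ivec := icross (imid e) (idir e).

Definition triple_coefs (e1 e2 : vert * vert) : ivec :=
  let w := imid e1 - imid e2 in
  (idot w (icross (idir e1) (idir e2)),
   idot w (icross (idir e1) (inormal e2)) + idot w (icross (inormal e1) (idir e2)),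
   idot w (icross (inormal e1) (inormal e2))).

Definition dot_coefs (e1 e2 : vert * vert) : ivec :=
  (idot (idir e1) (idir e2),
   idot (idir e1) (inormal e2) + idot (inormal e1) (idir e2),
   idot (inormal e1) (inormal e2)).

Definition edges : seq (vert * vert) :=
  [seq ((ij.1, sg.1), (ij.2, sg.2)) | ij : 'I_3 * 'I_3 <- [:: (0, 1); (0, 2); (1, 2)],
     sg <- [:: (false, false); (false, true); (true, false); (true, true)]].

Lemma mem_edges e : is_edge e -> e \in edges.
Proof.
case: e => [[[[|[|[|i]]] hi] b1] [[[|[|[|j]]] hj] b2]] //= _.
all: by case: b1; case: b2; vm_compute.
Qed.

Lemma dot_coefs_diag : all (fun e => dot_coefs e e == (2, 0, 4)) edges.
Proof. by vm_compute. Qed.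

(* The first two patterns are those of the pairs of edges of a common face. *)
Definition pair_classes : seq (ivec * ivec) :=
  [:: ((0, -4, 0), (1, 0, 0)); ((0, 4, 0), (-1, 0, 0));
      ((0, -8, 0), (0, 0, -4)); ((0, 16, 0), (-2, 0, 4));
      ((-4, -4, 8), (1, -4, 0)); ((4, 4, -8), (-1, 4, 0));
      ((4, -4, -8), (1, 4, 0)); ((-4, 4, 8), (-1, -4, 0))].

Lemma pair_coefs_classes :
  all (fun e1 => all (fun e2 =>
    (e1 == e2) || ((triple_coefs e1 e2, dot_coefs e1 e2) \in pair_classes)) edges) edges.
Proof. by vm_compute. Qed.

Definition e01 : vert * vert := ((0, false), (1, false)).
Definition e02 : vert * vert := ((0, false), (2, false)).

Lemma coefs_e01_e02 : triple_coefs e01 e02 = (0, -4, 0) /\ dot_coefs e01 e02 = (1, 0, 0).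
Proof. by split; vm_compute. Qed.

Section Configuration.
Variable R : realType.
Local Notation sqrt2 := (Num.sqrt (2 : R)).

Lemma sqrt2_sq : sqrt2 ^+ 2 = 2.
Proof. by rewrite sqr_sqrtr // ler0n. Qed.

Lemma vtx_ivtx a : vtx R a = sqrt2 *: ivecR R (ivtx a).
Proof.
case: a => -[[|[|[|k]]] hk] [] //=; rewrite mk3Z.
all: by apply/rowP => -[[|[|[|i]]] hi]; rewrite !mxE //= ?mulr1 ?mulrN1 ?mulr0.
Qed.

Lemma edge_mid_imid e : edge_mid R e = (sqrt2 / 2) *: ivecR R (imid e).
Proof. by rewrite /edge_mid /imid ivecRD !vtx_ivtx -scalerDr scalerA mulrC. Qed.

Lemma edge_dir_idir e : edge_dir R e = sqrt2 *: ivecR R (idir e).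
Proof. by rewrite /edge_dir /idir ivecRB !vtx_ivtx scalerBr. Qed.

Lemma Ldir_ivecR (d : R) e :
  Ldir d e = (sqrt2 * cos d) *: ivecR R (idir e) + sin d *: ivecR R (inormal e).
Proof.
rewrite /Ldir edge_mid_imid edge_dir_idir crossZ cross_ivecR !scalerA.
have -> : sqrt2 / 2 * sqrt2 = 1 by rewrite mulrAC -expr2 sqrt2_sq divff // pnatr_eq0.
by rewrite mulr1 mulrC.
Qed.

Lemma triple_Ldir (d : R) e1 e2 :
  dot (edge_mid R e1 - edge_mid R e2) (cross (Ldir d e1) (Ldir d e2)) =
  sqrt2 / 2 * qform (triple_coefs e1 e2) (sqrt2 * cos d) (sin d).
Proof.
rewrite !edge_mid_imid -scalerBr -ivecRB dotZl !Ldir_ivecR dot_cross_comb.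
by rewrite !cross_ivecR !dot_ivecR /qform /triple_coefs intrD.
Qed.

Lemma dot_Ldir (d : R) e1 e2 :
  dot (Ldir d e1) (Ldir d e2) = qform (dot_coefs e1 e2) (sqrt2 * cos d) (sin d).
Proof. by rewrite !Ldir_ivecR dot_comb !dot_ivecR /qform /dot_coefs intrD. Qed.

Lemma dot_Ldir_edge (d : R) e : is_edge e -> dot (Ldir d e) (Ldir d e) = 4.
Proof.
move=> /mem_edges/(allP dot_coefs_diag)/eqP coefs_e.
by rewrite dot_Ldir coefs_e /qform exprMn sqrt2_sq sin2cos2; ring.
Qed.

Lemma line_dist_edges (d : R) e1 e2 (a := sqrt2 * cos d) (b := sin d)
    (t := qform (triple_coefs e1 e2) a b) (p := qform (dot_coefs e1 e2) a b) :
  is_edge e1 -> is_edge e2 -> p ^+ 2 < 16 ->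
  line_dist (edge_mid R e1) (Ldir d e1) (edge_mid R e2) (Ldir d e2) =
  Num.sqrt (t ^+ 2 / (2 * (16 - p ^+ 2))).
Proof.
move=> e1_edge e2_edge p_lt.
have normal_sq : dot (cross (Ldir d e1) (Ldir d e2)) (cross (Ldir d e1) (Ldir d e2)) = 16 - p ^+ 2.
  by rewrite dot_cross_cross !dot_Ldir_edge // dot_Ldir -/p -natrM.
rewrite line_dist_skew normal_sq ?subr_gt0 // triple_Ldir; congr Num.sqrt.
rewrite exprMn expr_div_n sqrt2_sq -/a -/b -/t; field.
by rewrite subr_eq0 eq_sym lt_eqF.
Qed.

End Configuration.

Section ClassBounds.
Variable R : realType.

Lemma excess_bound (q t p D E : R) :
  16 - p ^+ 2 = D -> t ^+ 2 - (2 - q) * (2 * D) = E -> 0 < D -> 0 <= E ->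
  p ^+ 2 < 16 /\ (2 - q) * (2 * (16 - p ^+ 2)) <= t ^+ 2.
Proof. by move=> <- eE D_gt0 E_ge0; rewrite -subr_gt0 -subr_ge0 eE. Qed.

Lemma pair_class_bound (T P : ivec) (q a b : R) : (T, P) \in pair_classes ->
  0 <= q -> q ^+ 2 = 3 -> a ^+ 2 = 8 - 4 * q -> b ^+ 2 = 2 * q - 3 -> 0 <= a * b ->
  qform P a b ^+ 2 < 16 /\ (2 - q) * (2 * (16 - qform P a b ^+ 2)) <= qform T a b ^+ 2.
Proof.
move=> TP q_ge0 q2 a2 b2 ab_ge0.
have q_gt : 12 / 7 < q by nra.
have q_lt : 64 * q < 111 by nra.
have ab2 : (a * b) ^+ 2 = 28 * q - 48 by rewrite exprMn a2 b2; ring: q2.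
have ab_lt : a * b < 3 * (2 - q).
  rewrite -(@ltr_pXn2r _ 2) ?nnegrE //; last by lra.
  have -> : (3 * (2 - q)) ^+ 2 = 63 - 36 * q by ring: q2.
  by rewrite ab2; lra.
rewrite !inE in TP; repeat case/orP: TP => TP.
all: case/eqP: TP => -> ->; rewrite /qform /=.
(* 16 - p^2 and the excess t^2 - 2 (2 - q) (16 - p^2) in closed form, modulo
   q^2 = 3 and (a b)^2 = 28 q - 48. *)
all: [> apply: (@excess_bound q _ _ (32 * (2 * q - 3)) 0)
     |  apply: (@excess_bound q _ _ (32 * (2 * q - 3)) 0)
     |  apply: (@excess_bound q _ _ (64 * (3 * q - 5)) (128 * (3 * q - 5)))
     |  apply: (@excess_bound q _ _ (128 * (7 * q - 12)) (256 * (2 * q - 3)))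
     |  apply: (@excess_bound q _ _ (32 * (2 - q) * (3 * (2 - q) + a * b)) (64 * (2 - q) ^+ 2))
     |  apply: (@excess_bound q _ _ (32 * (2 - q) * (3 * (2 - q) + a * b)) (64 * (2 - q) ^+ 2))
     |  apply: (@excess_bound q _ _ (32 * (2 - q) * (3 * (2 - q) - a * b)) (64 * (2 - q) ^+ 2))
     |  apply: (@excess_bound q _ _ (32 * (2 - q) * (3 * (2 - q) - a * b)) (64 * (2 - q) ^+ 2)) ].
all: first [by ring: a2 b2 q2 | by rewrite ?mulr_gt0 ?mulr_ge0 ?sqr_ge0 //; lra].
Qed.

End ClassBounds.

Section Extremum.
Variable R : realType.
Local Notation sqrt2 := (Num.sqrt (2 : R)).
Local Notation sqrt3 := (Num.sqrt (3 : R)).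

Lemma sqrt3_sq : sqrt3 ^+ 2 = 3.
Proof. by rewrite sqr_sqrtr // ler0n. Qed.

Lemma sqrt3_le2 : sqrt3 <= 2.
Proof. by have := sqrt3_sq; have := sqrtr_ge0 (3 : R); nra. Qed.

Lemma cos2_le1 (d : R) : cos d ^+ 2 <= 1.
Proof. by rewrite -(cos2Dsin2 d) lerDl sqr_ge0. Qed.

Lemma fO_cos (d : R) : fO d = 4 * cos d ^+ 2 * (1 - cos d ^+ 2) / (4 - cos d ^+ 2 ^+ 2).
Proof.
have c2_le1 := cos2_le1 d.
rewrite /fO (_ : 2 * d = d + d) ?sinD ?cosD; last by ring.
have -> : (sin d * cos d + cos d * sin d) ^+ 2 = 4 * cos d ^+ 2 * sin d ^+ 2 by ring.
rewrite -[sin d * sin d]expr2 sin2cos2 -[cos d * cos d]expr2.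
have c2_ge0 := sqr_ge0 (cos d).
move: (cos d ^+ 2) c2_le1 c2_ge0 => x x_le1 x_ge0.
by field; apply/and3P; split; apply/eqP; nra.
Qed.

Lemma ratio_le_2_sub_sqrt3 (q x : R) : 0 <= q -> q ^+ 2 = 3 -> 0 <= x <= 1 ->
  4 * x * (1 - x) / (4 - x ^+ 2) <= 2 - q.
Proof.
move=> q_ge0 q2 /andP[x_ge0 x_le1].
have den_gt0 : 0 < 4 - x ^+ 2 by nra.
rewrite ler_pdivrMr // -subr_ge0 -(pmulr_rge0 _ (_ : 0 < 2 + q)); last by lra.
have -> : (2 + q) * ((2 - q) * (4 - x ^+ 2) - 4 * x * (1 - x)) = ((2 + q) * x - 2) ^+ 2.
  by ring: q2.
exact: sqr_ge0.
Qed.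

Lemma deltaO_trig (dO : R) : 0 <= dO <= pi / 2 -> tan dO = Num.sqrt sqrt3 / sqrt2 ->
  [/\ cos dO ^+ 2 = 4 - 2 * sqrt3, 0 <= cos dO & 0 <= sin dO].
Proof.
move=> /andP[dO_ge0 dO_le] tan_dO.
have pi_gt0 : 0 < pi :> R := pi_gt0 R.
have c_ge0 : 0 <= cos dO by apply: cos_ge0_pihalf; apply/andP; split; lra.
have s_ge0 : 0 <= sin dO by apply: sin_ge0_pi; apply/andP; split; lra.
split=> //.
have c_neq0 : cos dO != 0.
  apply/eqP => c0; move/eqP: tan_dO; rewrite /tan c0 invr0 mulr0 eq_sym.
  by rewrite gt_eqF // divr_gt0 // sqrtr_gt0 ?sqrtr_gt0 ltr0n.
have s_eq : sin dO = tan dO * cos dO by rewrite /tan divfK.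
have t2 : tan dO ^+ 2 = sqrt3 / 2.
  by rewrite tan_dO expr_div_n sqr_sqrtr ?sqrtr_ge0 // sqrt2_sq.
have h : cos dO ^+ 2 * (1 + sqrt3 / 2) = 1.
  by rewrite -t2 mulrDr mulr1 mulrC -exprMn -s_eq cos2Dsin2.
have inv : (1 + sqrt3 / 2) * (4 - 2 * sqrt3) = 1 by field: sqrt3_sq.
by rewrite -[LHS]mulr1 -[X in _ * X]inv mulrA h mul1r.
Qed.

Lemma fO_le (d : R) : fO d <= 2 - sqrt3.
Proof.
by rewrite fO_cos ratio_le_2_sub_sqrt3 ?sqrtr_ge0 ?sqrt3_sq ?sqr_ge0 ?cos2_le1.
Qed.

Lemma fO_deltaO (dO : R) : cos dO ^+ 2 = 4 - 2 * sqrt3 -> fO dO = 2 - sqrt3.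
Proof.
move=> c2; have q2 := sqrt3_sq; have q_ge0 : 0 <= sqrt3 := sqrtr_ge0 _.
have q_gt : 3 / 2 < sqrt3 by nra.
by rewrite fO_cos c2; field: q2; apply/eqP; nra.
Qed.

Lemma line_dist_e01_e02 (d : R) :
  line_dist (edge_mid R e01) (Ldir d e01) (edge_mid R e02) (Ldir d e02) = Num.sqrt (fO d).
Proof.
have [T P] := coefs_e01_e02.
have c2_le1 := cos2_le1 d.
have c2_ge0 := sqr_ge0 (cos d).
rewrite line_dist_edges ?T ?P // /qform /= ?mulr0z ?mulr1z ?mulrNz ?mulrz_nat.
all: rewrite !mul0r !mul1r !addr0 ?add0r !exprMn sqrt2_sq ?sin2cos2 ?fO_cos.
  by congr Num.sqrt; field; apply/andP; split; apply/eqP; nra.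
by nra.
Qed.

Lemma line_dist_deltaO_ge (dO : R) e1 e2 : is_edge e1 -> is_edge e2 -> e1 <> e2 ->
  cos dO ^+ 2 = 4 - 2 * sqrt3 -> 0 <= cos dO -> 0 <= sin dO ->
  Num.sqrt (2 - sqrt3) <= line_dist (edge_mid R e1) (Ldir dO e1) (edge_mid R e2) (Ldir dO e2).
Proof.
move=> e1_edge e2_edge e12 c2 c_ge0 s_ge0.
have /orP[/eqP//|cls] :=
  allP (allP pair_coefs_classes _ (mem_edges e1_edge)) _ (mem_edges e2_edge).
have a2 : (sqrt2 * cos dO) ^+ 2 = 8 - 4 * sqrt3 by rewrite exprMn sqrt2_sq c2; ring.
have b2 : sin dO ^+ 2 = 2 * sqrt3 - 3 by rewrite sin2cos2 c2; ring.
have ab_ge0 : 0 <= sqrt2 * cos dO * sin dO by rewrite !mulr_ge0 ?sqrtr_ge0.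
have [p_lt bound] := pair_class_bound cls (sqrtr_ge0 _) sqrt3_sq a2 b2 ab_ge0.
have den_gt0 : 0 < 2 * (16 - qform (dot_coefs e1 e2) (sqrt2 * cos dO) (sin dO) ^+ 2).
  by rewrite mulr_gt0 // subr_gt0.
by rewrite line_dist_edges // ler_sqrt ?divr_ge0 ?sqr_ge0 ?(ltW den_gt0) // ler_pdivlMr.
Qed.

End Extremum.

Section MinimalDistance.
Variable R : realType.

Lemma e01_e02_edges : [/\ is_edge e01, is_edge e02 & e01 <> e02].
Proof. by split => // /(congr1 (fun e => val e.2.1)). Qed.

Lemma dmin_le (d : R) e1 e2 : is_edge e1 -> is_edge e2 -> e1 <> e2 ->
  dmin d <= line_dist (edge_mid R e1) (Ldir d e1) (edge_mid R e2) (Ldir d e2).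
Proof.
move=> e1_edge e2_edge e12; apply: ge_inf; last by exists e1, e2.
by exists 0 => _ [? [? [_ _ _ ->]]]; exact: line_dist_ge0.
Qed.

Lemma dmin_ge (d x : R) :
  (forall e1 e2, is_edge e1 -> is_edge e2 -> e1 <> e2 ->
     x <= line_dist (edge_mid R e1) (Ldir d e1) (edge_mid R e2) (Ldir d e2)) ->
  x <= dmin d.
Proof.
move=> lb; rewrite /dmin; apply: lb_le_inf => [|_ [e1 [e2 [e1_edge e2_edge e12 ->]]]].
  have [e01_edge e02_edge e01_e02] := e01_e02_edges.
  exists (line_dist (edge_mid R e01) (Ldir d e01) (edge_mid R e02) (Ldir d e02)).
  by exists e01, e02; split.
exact: lb.
Qed.

End MinimalDistance.

Theorem theorem1 (R : realType) (deltaO : R) :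
  0 <= deltaO <= pi / 2 ->
  tan deltaO = Num.sqrt (Num.sqrt 3) / Num.sqrt 2 ->
  [/\ (forall delta : R, 0 <= delta <= pi / 2 -> dmin delta <= dmin deltaO),
      dmin deltaO ^+ 2 = fO deltaO
    & fO deltaO = 2 - Num.sqrt 3].
Proof.
move=> dO_range tan_dO.
have [c2 c_ge0 s_ge0] := deltaO_trig dO_range tan_dO.
have [e01_edge e02_edge e01_e02] := e01_e02_edges.
have fO_dO := fO_deltaO c2.
have dmin_dO : dmin deltaO = Num.sqrt (2 - Num.sqrt 3).
  apply/le_anti/andP; split.
    by rewrite -fO_dO -line_dist_e01_e02; exact: dmin_le.
  by apply: dmin_ge => e1 e2 e1_edge e2_edge e12; exact: line_dist_deltaO_ge.
have q_le2 := sqrt3_le2 R.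
split; last exact: fO_dO.
  move=> delta _; rewrite dmin_dO.
  apply: le_trans (dmin_le delta e01_edge e02_edge e01_e02) _.
  by rewrite line_dist_e01_e02 ler_sqrt ?subr_ge0 // fO_le.
by rewrite dmin_dO sqr_sqrtr ?subr_ge0.
Qed.
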